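(* Let $C$ and $E$ be finite non-empty constraints on the same sequence of variables with $C\subseteq E$, and let $\mathcal R$ be a set of rules of the form $\mathbf A\to\mathbf B$ involving only these variables. Then $C$ is closed under all rules of $\mathcal R$ that are valid for $E$ if and only if $C$ is closed under all minimal valid rules in $\mathcal R$ for $E$.
   Context: A constraint on variables $x_1,\dots,x_n$ with domains $D_1,\dots,D_n$ is a subset of $D_1\times\dots\times D_n$; for a tuple $d$ and variable $x$, $d[x]$ is the corresponding component. Atomic formulas are $x=a$, $x\neq a$, $x\in S$; $\models_d x=a$ iff $d[x]=a$, $\models_d x\neq a$ iff $d[x]\neq a$, $\models_d x\in S$ iff $d[x]\in S$; for a sequence $\mathbf A$ of atomic formulas, $\models_d\mathbf A$ iff $d$ satisfies each of them. A rule is $\mathbf A\to\mathbf B$ with $\mathbf A,\mathbf B$ finite sequences of atomic formulas. For a constraint $C$: - $\mathbf A\to\mathbf B$ is valid for $C$ if for all $d\in C$, $\models_d\mathbf A$ implies $\models_d\mathbf B$; - $C$ is closed under $\mathbf A\to\mathbf B$ if ($\models_d\mathbf A$ for all $d\in C$) implies ($\models_d\mathbf B$ for all $d\in C$); - $\mathbf A\to\mathbf B$ is feasible for $C$ if $\models_d\mathbf A$ for some $d\in C$; - $\mathbf A\to\mathbf B$ extends $\mathbf A'\to\mathbf B$ (same conclusion) if $\mathbf A$ contains all variables occurring in $\mathbf A'$ and for all $d\in C$, $\models_d\mathbf A$ implies $\models_d\mathbf A'$; $r$ properly extends $r'$ if $r$ extends $r'$ but $r'$ does not extend $r$; - given a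 set of rules $\mathcal R$, a rule is minimal in $\mathcal R$ (for $C$) if it is feasible for $C$ and does not properly extend a rule of $\mathcal R$ valid for $C$. *)

From mathcomp Require Import all_boot.
From Stdlib Require Import List.
Set Implicit Arguments. Unset Strict Implicit. Unset Printing Implicit Defensive.

Section Rules.
Variable n : nat.
Variable D : 'I_n -> Type.

Definition tuple_t := forall i : 'I_n, D i.

Definition constraint := tuple_t -> Prop.

Definition finite_constraint (C : constraint) : Prop :=
  exists l : list tuple_t, forall d, C d <-> List.In d l.

Definition nonempty_constraint (C : constraint) : Prop := exists d, C d.

Definition subconstraint (C E : constraint) : Prop := forall d, C d -> E d.

Inductive atom : Type :=
| AEq  (i : 'I_n) (a : D i)
| ANeq (i : 'I_n) (a : D i)
| AIn  (i : 'I_n) (s : D i -> Prop).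

Definition atom_var (f : atom) : 'I_n :=
  match f with AEq i _ => i | ANeq i _ => i | AIn i _ => i end.

Definition sat_atom (d : tuple_t) (f : atom) : Prop :=
  match f with
  | AEq i a => d i = a
  | ANeq i a => d i <> a
  | AIn i s => s (d i)
  end.

Definition sat (d : tuple_t) (A : list atom) : Prop :=
  forall f, List.In f A -> sat_atom d f.

Record rule : Type := Rule { premise : list atom; conclusion : list atom }.

Definition occurs (i : 'I_n) (A : list atom) : Prop :=
  exists f, List.In f A /\ atom_var f = i.

Definition valid (C : constraint) (r : rule) : Prop :=
  forall d, C d -> sat d (premise r) -> sat d (conclusion r).

Definition closed_under (C : constraint) (r : rule) : Prop :=
  (forall d, C d -> sat d (premise r)) -> (forall d, C d -> sat d (conclusion r)).

Definition feasible (C : constraint) (r : rule) : Prop :=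
  exists d, C d /\ sat d (premise r).

Definition extends (C : constraint) (r r' : rule) : Prop :=
  conclusion r = conclusion r' /\
  (forall i, occurs i (premise r') -> occurs i (premise r)) /\
  (forall d, C d -> sat d (premise r) -> sat d (premise r')).

Definition properly_extends (C : constraint) (r r' : rule) : Prop :=
  extends C r r' /\ ~ extends C r' r.

Definition minimal (C : constraint) (R : rule -> Prop) (r : rule) : Prop :=
  feasible C r /\
  ~ (exists r', R r' /\ valid C r' /\ properly_extends C r r').

End Rules.

From mathcomp Require Import boolp all_boot.

Set Implicit Arguments.
Unset Strict Implicit.
Unset Printing Implicit Defensive.

(* Every feasible valid rule extends a minimal one: following proper extensions
   inside [R] strictly decreases the number of variables of the premise plus the
   number of tuples of the finite constraint [E] violating the premise, so the
   descent stops at a minimal rule. Closure of [C] under that minimal rule then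
   transfers back along the extension, because [C] is contained in [E]. *)

Lemma has_In (T : Type) (p : pred T) (s : seq T) (x : T) :
  List.In x s -> p x -> has p s.
Proof.
elim: s => //= y s IH [<- -> // | /IH h px].
by rewrite h ?orbT.
Qed.

Lemma sub_count_lt (T : Type) (a b : pred T) (s : seq T) :
  subpred a b -> has (predD b a) s -> count a s < count b s.
Proof.
move=> sub_ab; rewrite has_count => pos_ba.
have := count_predUI a (predD b a) s.
have -> : count (predU a (predD b a)) s = count b s.
  by apply: eq_count => x /=; case ax: (a x); rewrite ?(sub_ab x ax) ?andbT.
have -> : count (predI a (predD b a)) s = 0.
  by rewrite (@eq_count _ _ pred0) ?count_pred0 // => x /=; case: (a x); rewrite ?andbF.
by rewrite addn0 => ->; rewrite -addn1 leq_add2l.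
Qed.

Section Extension.
Variables (n : nat) (D : 'I_n -> Type) (E : constraint D).

Lemma extends_refl (r : rule D) : extends E r r.
Proof. by split=> //; split. Qed.

Lemma extends_trans (r1 r2 r3 : rule D) :
  extends E r1 r2 -> extends E r2 r3 -> extends E r1 r3.
Proof.
move=> [c12 [v12 s12]] [c23 [v23 s23]]; split; first by rewrite c12.
by split=> [i /v23 /v12 | d Ed /(s12 d Ed) /(s23 d Ed)].
Qed.

Lemma feasible_extends (r r' : rule D) :
  extends E r r' -> feasible E r -> feasible E r'.
Proof. by move=> [_ [_ s]] [d [Ed sd]]; exists d; split; last exact: s. Qed.

Lemma closed_under_extends (C : constraint D) (r r' : rule D) :
  subconstraint C E -> extends E r r' -> closed_under C r' -> closed_under C r.
Proof.
move=> sCE [c [_ s]] closed_r' prem_r.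
by rewrite /closed_under c; apply: closed_r' => d Cd; apply: s (sCE d Cd) (prem_r d Cd).
Qed.

Lemma not_extends_witness (r r' : rule D) :
  extends E r r' -> ~ extends E r' r ->
  (exists i, occurs i (premise r) /\ ~ occurs i (premise r')) \/
  (exists d, E d /\ sat d (premise r') /\ ~ sat d (premise r)).
Proof.
move=> [c _] next; apply: contrapT => /not_orP[novar nopt]; apply: next.
split=> //; split=> [i ri | d Ed r'd]; apply: contrapT.
  by move=> r'i; apply: novar; exists i.
by move=> rd; apply: nopt; exists d.
Qed.

End Extension.

Section FiniteExtension.
Variables (n : nat) (D : 'I_n -> Type) (E : constraint D) (lE : seq (tuple_t D)).
Hypothesis lE_E : forall d, E d <-> List.In d lE.

Definition premise_vars (r : rule D) : {set 'I_n} :=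
  [set i | `[< occurs i (premise r) >]].

Definition premise_failures (r : rule D) : nat :=
  count (fun d => `[< E d /\ ~ sat d (premise r) >]) lE.

Definition extension_rank (r : rule D) : nat :=
  #|premise_vars r| + premise_failures r.

Lemma premise_vars_extends (r r' : rule D) :
  extends E r r' -> premise_vars r' \subset premise_vars r.
Proof.
by move=> [_ [v _]]; apply/subsetP => i; rewrite !inE => /asboolP/v/asboolP.
Qed.

Lemma premise_failures_extends (r r' : rule D) :
  extends E r r' -> premise_failures r' <= premise_failures r.
Proof.
move=> [_ [_ s]]; apply: sub_count => d /asboolP[Ed r'd]; apply/asboolP.
by split=> // rd; apply: r'd; apply: s.
Qed.

Lemma extension_rank_properly_extends (r r' : rule D) :
  properly_extends E r r' -> extension_rank r' < extension_rank r.
Proof.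
move=> [ext next]; rewrite /extension_rank.
case: (not_extends_witness ext next) => [[i [ri r'i]] | [d [Ed [r'd rd]]]].
  rewrite -addSn leq_add ?premise_failures_extends // proper_card //.
  apply/properP; split; first exact: premise_vars_extends.
  by exists i; rewrite !inE; [exact/asboolP | exact/asboolP].
rewrite -addnS leq_add ?subset_leq_card ?premise_vars_extends //.
apply: sub_count_lt.
  move=> x /asboolP[Ex r'x]; apply/asboolP; split=> // rx; apply: r'x.
  by case: ext => [_ [_ s]]; apply: s.
apply: (has_In (x := d)); first exact/lE_E.
by apply/andP; split; apply/asboolP => //; case.
Qed.

Lemma exists_minimal_extension (R : rule D -> Prop) (r : rule D) :
  R r -> valid E r -> feasible E r ->
  exists2 r', [/\ R r', valid E r' & minimal E R r'] & extends E r r'.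
Proof.
have [k] := ubnP (extension_rank r); elim: k r => // k IH r rank_r Rr vr fr.
have [min_r | nmin_r] := pselect (minimal E R r).
  by exists r; [split | exact: extends_refl].
have [r' [Rr' [vr' ext]]] : exists r', R r' /\ valid E r' /\ properly_extends E r r'.
  by apply: contrapT => nex; apply: nmin_r.
have rank_r' : extension_rank r' < k.
  exact: leq_trans (extension_rank_properly_extends ext) rank_r.
have [r'' min_r'' ext'] := IH r' rank_r' Rr' vr' (feasible_extends ext.1 fr).
by exists r''; last exact: extends_trans ext.1 ext'.
Qed.

End FiniteExtension.

Theorem mainTheorem2 (n : nat) (D : 'I_n -> Type)
  (C E : constraint D) (R : rule D -> Prop) :
  finite_constraint C -> nonempty_constraint C ->
  finite_constraint E -> nonempty_constraint E ->
  subconstraint C E ->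
  ((forall r, R r -> valid E r -> closed_under C r) <->
   (forall r, R r -> valid E r -> minimal E R r -> closed_under C r)).
Proof.
move=> _ [c Cc] [lE lE_E] _ sCE.
split=> [closed_valid r Rr vr _ | closed_min r Rr vr prem_r]; first exact: closed_valid.
have fr : feasible E r by exists c; split; [exact: sCE | exact: prem_r].
have [r' [Rr' vr' min_r'] ext] := exists_minimal_extension lE_E Rr vr fr.
exact: closed_under_extends sCE ext (closed_min r' Rr' vr' min_r') prem_r.
Qed.
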